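(* For every positive integer $k$, the maximum cardinality of an avoidable subset of $\overline{S_k}$ is $k!-k$.
   Context: For $\sigma\in S_n$, the cyclic permutation $[\sigma]$ is the set of all rotations of $\sigma$. For $\pi\in S_k$, the totally vincular pattern $\overline{\pi}$ is $\pi$ with all adjacent positions overlined; a cyclic permutation $[\sigma]$ of length $n\ge k$ contains $\overline{\pi}$ if some $k$ cyclically consecutive entries of $\sigma$ are order-isomorphic to $\pi$. $\overline{S_k}$ is the set of totally vincular patterns of length $k$. For $\Pi\subseteq\overline{S_k}$, $\mathrm{Av}_n[\Pi]$ is the set of cyclic permutations of length $n$ containing no pattern of $\Pi$. $\Pi$ is unavoidable if $|\mathrm{Av}_n[\Pi]|=0$ for all sufficiently large $n$, and avoidable otherwise (i.e. $|\mathrm{Av}_n[\Pi]|>0$ for arbitrarily large $n$). *)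

From mathcomp Require Import all_boot all_order all_fingroup.
Set Implicit Arguments. Unset Strict Implicit. Unset Printing Implicit Defensive.

(* A permutation sigma in S_n is a {perm 'I_n}; its entries are read as the
   values 0..n-1.  [pval sigma i] is the entry at position (i mod n). *)
Definition pval (n : nat) (sigma : {perm 'I_n}) (i : nat) : nat :=
  oapp (fun j : 'I_n => val (sigma j)) 0 (insub (i %% n)).

Definition rotclass (n : nat) (sigma : {perm 'I_n}) : {set {perm 'I_n}} :=
  [set tau : {perm 'I_n} |
    [exists r : 'I_n, [forall j : 'I_n, pval tau j == pval sigma (j + r)]]].

(* [sigma] contains the totally vincular pattern \overline{pi} (pi in S_k):
   n >= k and some k cyclically consecutive entries of sigma are
   order-isomorphic to pi. (Independent of the representative sigma.) *)
Definition ccontains (k n : nat) (pi : {perm 'I_k}) (sigma : {perm 'I_n}) : bool :=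
  (k <= n) &&
  [exists i : 'I_n, [forall a : 'I_k, [forall b : 'I_k,
      (pval sigma (i + a) < pval sigma (i + b)) == (val (pi a) < val (pi b))]]].

Definition Av (k n : nat) (Pi : {set {perm 'I_k}}) : {set {set {perm 'I_n}}} :=
  [set rotclass sigma | sigma in
     [set sigma : {perm 'I_n} | [forall pi in Pi, ~~ ccontains pi sigma]]].

Definition avoidable (k : nat) (Pi : {set {perm 'I_k}}) : Prop :=
  forall N : nat, exists2 n : nat, N <= n & 0 < #|Av n Pi|.

From Pilot Require Import Defs.
From mathcomp Require Import all_boot all_order all_fingroup.
From mathcomp Require Import zify.

(* The identity cyclic permutation of any length n >= k contains only the k
   patterns a |-> a + r (mod k), so the other k! - k patterns form an
   avoidable set.  Conversely, in a cyclic permutation of length n >= k, for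
   every position j < k the window of length k placing the maximal entry n - 1
   at offset j has a pattern whose maximum sits at j; these k patterns are
   pairwise distinct and none of them may lie in an avoidable set. *)

Lemma card_ltn_ord k m : m <= k -> #|[set c : 'I_k | c < m]| = m.
Proof.
move=> le_mk.
have -> : [set c : 'I_k | c < m] = [set widen_ord le_mk c | c : 'I_m].
  apply/setP=> c; rewrite inE; apply/idP/imsetP => [lt_cm | [c' _ ->] /=].
    by exists (Ordinal lt_cm) => //; apply: val_inj.
  exact: ltn_ord.
rewrite card_imset ?card_ord //.
by move=> a b /(congr1 val) /= /val_inj.
Qed.

Lemma card_perm_ltn k (pi : {perm 'I_k}) a : #|[set b | pi b < pi a]| = pi a.
Proof.
have -> : [set b | pi b < pi a] = pi @^-1: [set c : 'I_k | c < pi a].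
  by apply/setP=> b; rewrite !inE.
by rewrite card_preimset ?card_ltn_ord //; [apply: ltnW | apply: perm_inj].
Qed.

Lemma perm_ltn_inj k (pi tau : {perm 'I_k}) :
  (forall a b, (pi a < pi b) = (tau a < tau b)) -> pi = tau.
Proof.
move=> pi_tau; apply/permP=> a; apply: val_inj.
rewrite /= -(card_perm_ltn _ pi a) -(card_perm_ltn _ tau a).
by apply: eq_card => b; rewrite !inE pi_tau.
Qed.

Lemma perm_ltn_iso k (w : 'I_k -> nat) : injective w ->
  exists pi : {perm 'I_k}, forall a b, (w a < w b) = (pi a < pi b).
Proof.
move=> w_inj.
pose rank a := #|[set b | w b < w a]|.
have rank_lt a : rank a < k.
  rewrite -[k]card_ord -cardsT; apply: proper_card; apply/properP.
  by split; [apply/subsetP | exists a; rewrite ?inE ?ltnn].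
have rank_mono a b : w a < w b -> rank a < rank b.
  move=> lt_ab; apply: proper_card; apply/properP; split.
    by apply/subsetP=> c; rewrite !inE => /ltn_trans; apply.
  by exists a; rewrite !inE ?ltnn.
have w_ltgt a b : a != b -> (w a < w b) || (w b < w a).
  move=> neq_ab; case: ltngtP => // /w_inj eq_ab.
  by rewrite eq_ab eqxx in neq_ab.
have rank_inj : injective (fun a => Ordinal (rank_lt a)).
  move=> a b /(congr1 val) /= eq_r; apply/eqP/negPn/negP => /w_ltgt.
  by case/orP=> /rank_mono; rewrite eq_r ltnn.
exists (perm rank_inj) => a b; rewrite !permE /=.
apply/idP/idP => [/rank_mono // | lt_r].
have neq_ab : a != b by apply: contraTneq lt_r => ->; rewrite ltnn.
case/orP: (w_ltgt a b neq_ab) => // /rank_mono lt_r'.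
by have := ltn_trans lt_r lt_r'; rewrite ltnn.
Qed.

(* Unqualified [pval] is the underlying function of a permutation (perm.v). *)
Lemma pvalE n (sigma : {perm 'I_n}) (n_gt0 : 0 < n) (i : nat) :
  Defs.pval sigma i = sigma (Ordinal (ltn_pmod i n_gt0)).
Proof.
rewrite /Defs.pval (insubT (fun x => x < n) (ltn_pmod i n_gt0)) /=.
by congr (val (sigma _)); apply: val_inj.
Qed.

Lemma ccontainsP k n (pi : {perm 'I_k}) (sigma : {perm 'I_n}) :
  reflect (k <= n /\ exists i : 'I_n, forall a b : 'I_k,
             (Defs.pval sigma (i + a) < Defs.pval sigma (i + b)) =
             (pi a < pi b))
          (ccontains pi sigma).
Proof.
apply: (iffP andP) => -[le_kn ex_i]; split=> //.
  case/existsP: ex_i => i /forallP win; exists i => a b.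
  by move/(_ a)/forallP/(_ b)/eqP: win.
case: ex_i => i win; apply/existsP; exists i.
by apply/forallP=> a; apply/forallP=> b; rewrite win.
Qed.

(* In the window of the cycle 0, 1, ..., n - 1 starting at i, the order of
   two entries only depends on their positions relative to the wrap-around
   point n - i. *)
Lemma ltn_addn_mod n i a b : i < n -> a < n -> b < n ->
  ((i + a) %% n < (i + b) %% n) =
  if (a < n - i) == (b < n - i) then a < b else n - i <= a.
Proof.
move=> lt_in lt_an lt_bn.
have modE x : x < n -> (i + x) %% n = if x < n - i then i + x else i + x - n.
  move=> lt_xn; case: ifP => lt_x.
    by rewrite modn_small //; lia.
  have le_n : n <= i + x by lia.
  by rewrite -{1}(subnK le_n) modnDr modn_small //; lia.
rewrite !modE //; do 2!case: ifP => /=; lia.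
Qed.

Section Rotations.

Variables (k : nat) (k_gt0 : 0 < k).

Definition rot_ord (r a : 'I_k) : 'I_k := Ordinal (ltn_pmod (a + r) k_gt0).

Lemma rot_ord_inj r : injective (rot_ord r).
Proof.
move=> a b /(congr1 val) /eqP /=.
by rewrite eqn_modDr !modn_small // => /eqP /val_inj.
Qed.

Definition rot_perm r : {perm 'I_k} := perm (rot_ord_inj r).

Lemma rot_perm_inj : injective rot_perm.
Proof.
move=> r s /(congr1 (fun p : {perm 'I_k} => val (p (Ordinal k_gt0)))).
by rewrite !permE /= !add0n !modn_small // => /val_inj.
Qed.

Lemma card_rot_perm : #|[set rot_perm r | r : 'I_k]| = k.
Proof. by rewrite card_imset ?card_ord //; apply: rot_perm_inj. Qed.

Lemma ccontains_perm1 n (pi : {perm 'I_k}) :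
  ccontains pi (1 : {perm 'I_n}) -> pi \in [set rot_perm r | r : 'I_k].
Proof.
case/ccontainsP=> le_kn [i win].
have n_gt0 : 0 < n by apply: leq_trans le_kn.
pose c := minn k (n - i).
have lt_r : k - c < k by have := ltn_ord i; lia.
apply/imsetP; exists (Ordinal lt_r) => //; apply: perm_ltn_inj => a b.
have lt_ak := ltn_ord a; have lt_bk := ltn_ord b; have lt_in := ltn_ord i.
rewrite -win !pvalE !perm1 !permE /= ![_ + (k - c)]addnC.
rewrite !ltn_addn_mod ?subKn ?geq_minl //; try lia.
have cut x : x < k -> (x < c) = (x < n - i) by lia.
by rewrite [c <= a]leqNgt [n - i <= a]leqNgt !cut.
Qed.

End Rotations.

Lemma perm_ltn_max k (pi : {perm 'I_k.+1}) j :
  (forall a, a != j -> pi a < pi j) -> pi j = ord_max.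
Proof.
move=> max_j; apply: val_inj.
rewrite /= -card_perm_ltn.
transitivity #|[set~ j]|; last by rewrite cardsC1 card_ord.
apply: eq_card => b; rewrite !inE; apply/idP/idP => [|/max_j //].
by apply: contraTneq => ->; rewrite ltnn.
Qed.

Lemma card_ccontains n k (sigma : {perm 'I_n}) :
  k <= n -> k <= #|[set pi : {perm 'I_k} | ccontains pi sigma]|.
Proof.
case: k => [//|k] le_kn; case: n sigma le_kn => [//|n] sigma le_kn.
have n_gt0 := ltn0Sn n.
pose peak (pi : {perm 'I_k.+1}) := (pi^-1)%g ord_max.
rewrite -[X in X <= _]card_ord -cardsT; apply: leq_trans (leq_imset_card peak _).
apply/subset_leq_card/subsetP => j _.
have lt_jn : j < n.+1 := leq_trans (ltn_ord j) le_kn.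
pose i : 'I_n.+1 :=
  Ordinal (ltn_pmod ((sigma^-1)%g ord_max + n.+1 - j) n_gt0).
pose w (a : 'I_k.+1) := Defs.pval sigma (i + a).
have w_inj : injective w.
  move=> a b; rewrite /w !(pvalE _ _ n_gt0).
  move=> /val_inj /perm_inj /(congr1 val) /eqP /=.
  rewrite eqn_modDl !modn_small => [/eqP /val_inj //||];
    exact: leq_trans (ltn_ord _) le_kn.
have w_j : w j = n.
  rewrite /w (pvalE _ _ n_gt0).
  rewrite (_ : Ordinal _ = (sigma^-1)%g ord_max) ?permKV //.
  apply: val_inj; rewrite /= modnDml subnK; last by lia.
  by rewrite modnDr modn_small.
have [pi w_pi] := perm_ltn_iso _ _ w_inj.
apply/imsetP; exists pi.
  by rewrite inE; apply/ccontainsP; split=> //; exists i.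
suff max_j : pi j = ord_max by rewrite /peak -max_j permK.
have w_le a : w a <= n by rewrite /w (pvalE _ _ n_gt0) -ltnS ltn_ord.
apply: perm_ltn_max => a neq_aj.
by rewrite -w_pi ltn_neqAle (inj_eq w_inj) neq_aj w_j w_le.
Qed.

Theorem theorem7p1 (k : nat) (hk : 0 < k) :
  (exists Pi : {set {perm 'I_k}}, avoidable Pi /\ #|Pi| = k`! - k) /\
  (forall Pi : {set {perm 'I_k}}, avoidable Pi -> #|Pi| <= k`! - k).
Proof.
split.
  exists (~: [set rot_perm k hk r | r : 'I_k]); split.
    move=> N; exists (N + k); first exact: leq_addr.
    apply/card_gt0P; exists (rotclass (1 : {perm 'I_(N + k)})); apply: imset_f.
    rewrite inE; apply/forallP => pi; apply/implyP; rewrite inE.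
    by apply: contra; apply: ccontains_perm1.
  by rewrite cardsCs setCK card_Sn card_rot_perm.
move=> Pi /(_ k) [n le_kn /card_gt0P [C /imsetP [sigma]]].
rewrite inE => /forallP avoid_Pi _.
pose S := [set pi : {perm 'I_k} | ccontains pi sigma].
have sub_Pi : Pi \subset ~: S.
  by apply/subsetP => pi /(implyP (avoid_Pi pi)); rewrite !inE.
have le_kS : k <= #|S| := card_ccontains _ _ sigma le_kn.
apply: leq_trans (subset_leq_card sub_Pi) _.
by rewrite -card_Sn -(cardsC S) -addnBAC // leq_addl.
Qed.
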